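(* Let $(G,t)$ be an infinite biosphere. Then: (1) $\mathrm{CONV}$ is downward generic; (2) $\mathrm{CONV}\cap\mathrm{REF}$ is downward generic; (3) $\mathrm{IAP}$ is downward generic.
   Context: An infinite biosphere is a directed graph $G$ together with a function $t$ assigning a real number $t(v)$ to each vertex, such that: (1) if $v$ is a parent of $w$ (edge from $v$ to $w$) then $t(v)<t(w)$; (2) for every $r\in\mathbb R$ at most finitely many vertices $v$ have $t(v)<r$; (3) every vertex has finitely many children; (4) $G$ is infinite. $v$ is an ancestor of $w$ (and $w$ a descendant of $v$) if there is a directed path $v=v_1,\dots,v_n=w$ with $n>1$. A $G$-subset is a set of vertices. $\mathrm{IAP}$ is the set of $G$-subsets $S$ such that no $v\in S$ has both infinitely many descendants in $S$ and infinitely many non-descendants in $S$. $\mathrm{CONV}$ is the set of $G$-subsets $S$ such that every $v\in G$ having an ancestor in $S$ and a descendant in $S$ lies in $S$. $\mathrm{REF}$ is the set of $G$-subsets $S$ such that every $v\in S$ which has infinitely many descendants in $G$ has infinitely many descendants in $S$. For a nonempty linear order $(X,<)$, a descending chain of $G$-subsets indexed by $X$ is a family $\{C_\alpha\}_{\alpha\in X}$ with $C_\beta\subseteq C_\alpha$ whenever $\alpha<\beta$. A set $T$ of $G$-subsets is downward generic if for every descending chain $\{C_\alpha\}_{\alpha\in X}$ of nonempty $G$-subsets with each $C_\alpha\in T$, $\bigcap_\alpha C_\alpha\in T$. *)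

From Stdlib Require Import Reals List Relations.
Open Scope R_scope.

Definition finite_pred {V : Type} (P : V -> Prop) : Prop :=
  exists l : list V, forall v, P v -> In v l.

Definition infinite_pred {V : Type} (P : V -> Prop) : Prop := ~ finite_pred P.

Definition ancestor {V : Type} (E : V -> V -> Prop) : V -> V -> Prop :=
  clos_trans V E.

(* (V, E) is a directed graph (E v w : edge from parent v to child w). *)
Definition infinite_biosphere (V : Type) (E : V -> V -> Prop) (t : V -> R) : Prop :=
  (forall v w, E v w -> t v < t w) /\
  (forall r : R, finite_pred (fun v => t v < r)) /\
  (forall v, finite_pred (fun w => E v w)) /\
  infinite_pred (fun _ : V => True).

Definition IAP {V : Type} (E : V -> V -> Prop) (S : V -> Prop) : Prop :=
  forall v, S v ->
    ~ (infinite_pred (fun w => S w /\ ancestor E v w) /\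
       infinite_pred (fun w => S w /\ ~ ancestor E v w)).

Definition CONV {V : Type} (E : V -> V -> Prop) (S : V -> Prop) : Prop :=
  forall v, (exists a, S a /\ ancestor E a v) -> (exists d, S d /\ ancestor E v d) -> S v.

Definition REF {V : Type} (E : V -> V -> Prop) (S : V -> Prop) : Prop :=
  forall v, S v -> infinite_pred (fun w => ancestor E v w) ->
    infinite_pred (fun w => S w /\ ancestor E v w).

Definition strict_linear_order {X : Type} (lt : X -> X -> Prop) : Prop :=
  (forall x, ~ lt x x) /\
  (forall x y z, lt x y -> lt y z -> lt x z) /\
  (forall x y, lt x y \/ x = y \/ lt y x).

Definition downward_generic {V : Type} (T : (V -> Prop) -> Prop) : Prop :=
  forall (X : Type) (lt : X -> X -> Prop) (C : X -> V -> Prop),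
    strict_linear_order lt ->
    (exists x : X, True) ->
    (forall a b, lt a b -> forall v, C b v -> C a v) ->
    (forall a, exists v, C a v) ->
    (forall a, T (C a)) ->
    T (fun v => forall a, C a v).

(* Convexity and the IAP property pass to arbitrary intersections of their
   members resp. to subsets, so (1) and (3) need no chain at all.  For (2) let
   v lie in the intersection I of the chain and have infinitely many
   descendants.  Each member C_a, being refined, has infinitely many elements
   below some child of v; since v has finitely many children and the C_a are
   nested, a single child c works for every a.  Convexity of each C_a puts c
   in I, and c again has infinitely many descendants.  Iterating yields an
   infinite path below v inside I, whose vertices are distinct because times
   strictly increase along edges. *)

From Stdlib Require Import Reals List Relations Classical Lra Lia.

Section Biosphere.
Variables (V : Type) (E : V -> V -> Prop).

Lemma infinite_pred_mono (P Q : V -> Prop) :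
  (forall w, P w -> Q w) -> infinite_pred P -> infinite_pred Q.
Proof. intros HPQ HP [l Hl]. apply HP. exists l. intros v Hv. apply Hl, HPQ, Hv. Qed.

Lemma infinite_pred_inhabited (P : V -> Prop) : infinite_pred P -> exists w, P w.
Proof.
  intros HP. apply NNPP. intros Hempty. apply HP. exists nil.
  intros v Hv. apply Hempty. eauto.
Qed.

Lemma finite_pred_list_union {A : Type} (Q : A -> V -> Prop) (l : list A) :
  (forall c, In c l -> finite_pred (Q c)) ->
  finite_pred (fun w => exists c, In c l /\ Q c w).
Proof.
  induction l as [|a l IH]; intros Hfin.
  - exists nil. intros v [c [[] _]].
  - destruct (Hfin a (or_introl eq_refl)) as [la Hla].
    destruct IH as [ll Hll]. { intros c Hc. apply Hfin. right; exact Hc. }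
    exists (la ++ ll). intros v [c [[<-|Hc] HQ]]; apply in_or_app.
    + left; apply Hla, HQ.
    + right; apply Hll; eauto.
Qed.

Lemma ancestor_first_edge v w :
  ancestor E v w -> E v w \/ exists c, E v c /\ ancestor E c w.
Proof.
  intros Hvw. apply clos_trans_t1n in Hvw.
  destruct Hvw as [w Hvw|c w Hvc Hcw]; [left; exact Hvw|].
  right. exists c. split; [exact Hvc|]. apply clos_t1n_trans, Hcw.
Qed.

Lemma infinite_child_descendants (S : V -> Prop) v :
  finite_pred (fun c => E v c) ->
  infinite_pred (fun w => S w /\ ancestor E v w) ->
  exists c, E v c /\ infinite_pred (fun w => S w /\ ancestor E c w).
Proof.
  intros [ch Hch] Hinf. apply NNPP. intros Hno.
  destruct (finite_pred_list_union
              (fun c w => E v c /\ S w /\ ancestor E c w) ch) as [L HL].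
  { intros c _. destruct (classic (E v c)) as [Hvc|Hvc].
    - assert (Hfin : finite_pred (fun w => S w /\ ancestor E c w)).
      { apply NNPP. intros Hi. apply Hno. eauto. }
      destruct Hfin as [l Hl]. exists l. intros w [_ Hw]. apply Hl, Hw.
    - exists nil. intros w [Hw _]. contradiction. }
  apply Hinf. exists (ch ++ L). intros w [HSw Hvw]. apply in_or_app.
  destruct (ancestor_first_edge v w Hvw) as [Hvw'|[c [Hvc Hcw]]].
  - left; apply Hch, Hvw'.
  - right; apply HL. exists c. split; [apply Hch, Hvc|repeat split; assumption].
Qed.

Lemma ancestor_ray_infinite (P : V -> Prop) :
  (forall v, ~ ancestor E v v) ->
  (forall v, P v -> exists c, E v c /\ P c) ->
  forall v, P v -> infinite_pred (fun w => P w /\ ancestor E v w).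
Proof.
  intros Hacyc Hstep.
  assert (Hpath : forall n v, P v -> exists L, length L = n /\ NoDup L /\
            forall x, In x L -> P x /\ ancestor E v x).
  { induction n as [|n IH]; intros v Hv.
    - exists nil. split; [reflexivity|split; [constructor|intros x []]].
    - destruct (Hstep v Hv) as [c [Hvc Hc]].
      destruct (IH c Hc) as [L [Hlen [Hnd HL]]].
      exists (c :: L). split; [simpl; lia|split].
      + constructor; [|exact Hnd].
        intros Hin. exact (Hacyc c (proj2 (HL c Hin))).
      + intros x [<-|Hx]; [split; [exact Hc|apply t_step, Hvc]|].
        destruct (HL x Hx) as [HPx Hcx]. split; [exact HPx|].
        apply t_trans with c; [apply t_step, Hvc|exact Hcx]. }
  intros v Hv [l Hl].
  destruct (Hpath (S (length l)) v Hv) as [L [Hlen [Hnd HL]]].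
  assert (Hincl : incl L l) by (intros x Hx; apply Hl, HL, Hx).
  pose proof (NoDup_incl_length Hnd Hincl). lia.
Qed.

Lemma ancestor_time_lt (t : V -> R) :
  (forall v w, E v w -> t v < t w) ->
  forall v w, ancestor E v w -> t v < t w.
Proof. intros Ht v w Hvw. induction Hvw; [apply Ht; assumption|lra]. Qed.

Lemma CONV_downward_generic : downward_generic (CONV E).
Proof.
  intros X lt C _ _ _ _ HC v [a [Ha Hav]] [d [Hd Hvd]] x.
  apply (HC x v); eauto.
Qed.

Lemma IAP_downward_generic : downward_generic (IAP E).
Proof.
  intros X lt C _ [x0 _] _ _ HC v Hv [Hdesc Hnondesc].
  apply (HC x0 v (Hv x0)). split.
  - eapply infinite_pred_mono; [|exact Hdesc]. intros w [Hw Hvw]; auto.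
  - eapply infinite_pred_mono; [|exact Hnondesc]. intros w [Hw Hvw]; auto.
Qed.

End Biosphere.

Section Chain.
Variables (X A : Type) (lt : X -> X -> Prop) (K : X -> A -> Prop).
Hypothesis lt_linear : strict_linear_order lt.
Hypothesis K_antitone : forall a b, lt a b -> forall c, K b c -> K a c.

Lemma chain_avoid_list (x0 : X) (l : list A) :
  (forall c, In c l -> exists a, ~ K a c) ->
  exists b, forall c, In c l -> ~ K b c.
Proof.
  destruct lt_linear as [_ [_ Htri]].
  induction l as [|c l IH]; intros Havoid.
  - exists x0. intros c [].
  - destruct IH as [b Hb]. { intros c' Hc'. apply Havoid. right; exact Hc'. }
    destruct (Havoid c (or_introl eq_refl)) as [a Ha].
    destruct (Htri b a) as [Hba|[<-|Hab]].
    + exists a. intros c' [<-|Hc'] HK; [exact (Ha HK)|].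
      exact (Hb c' Hc' (K_antitone b a Hba c' HK)).
    + exists b. intros c' [<-|Hc']; auto.
    + exists b. intros c' [<-|Hc'] HK; [|exact (Hb c' Hc' HK)].
      exact (Ha (K_antitone a b Hab c HK)).
Qed.

Lemma chain_common_witness (x0 : X) (l : list A) :
  (forall a, exists c, In c l /\ K a c) ->
  exists c, In c l /\ forall a, K a c.
Proof.
  intros Hwit. apply NNPP. intros Hno.
  destruct (chain_avoid_list x0 l) as [b Hb].
  { intros c Hc. apply NNPP. intros Hall. apply Hno. exists c. split; [exact Hc|].
    intros a. apply NNPP. intros HKa. apply Hall. eauto. }
  destruct (Hwit b) as [c [Hc HK]]. exact (Hb c Hc HK).
Qed.

End Chain.

Section ConvexRefinedChain.
Variables (V : Type) (E : V -> V -> Prop).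
Hypothesis children_finite : forall v, finite_pred (fun w => E v w).
Hypothesis acyclic : forall v, ~ ancestor E v v.
Variables (X : Type) (lt : X -> X -> Prop) (C : X -> V -> Prop) (x0 : X).
Hypothesis lt_linear : strict_linear_order lt.
Hypothesis C_antitone : forall a b, lt a b -> forall v, C b v -> C a v.
Hypothesis C_conv_ref : forall a, CONV E (C a) /\ REF E (C a).

Let Cap (v : V) : Prop := forall a, C a v.

Lemma Cap_child_step v :
  Cap v -> infinite_pred (ancestor E v) ->
  exists c, E v c /\ Cap c /\ infinite_pred (ancestor E c).
Proof.
  intros Hv Hinf. destruct (children_finite v) as [ch Hch].
  set (K := fun a c => E v c /\ infinite_pred (fun w => C a w /\ ancestor E c w)).
  assert (K_antitone : forall a b, lt a b -> forall c, K b c -> K a c).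
  { intros a b Hab c [Hvc Hi]. split; [exact Hvc|].
    eapply infinite_pred_mono; [|exact Hi].
    intros w [Hw Hcw]. split; [eapply C_antitone; eauto|exact Hcw]. }
  assert (Hwit : forall a, exists c, In c ch /\ K a c).
  { intros a.
    destruct (infinite_child_descendants V E (C a) v (children_finite v)
                (proj2 (C_conv_ref a) v (Hv a) Hinf)) as [c [Hvc Hi]].
    exists c. split; [apply Hch, Hvc|split; assumption]. }
  destruct (chain_common_witness X V lt K lt_linear K_antitone x0 ch Hwit)
    as [c [_ HK]].
  destruct (HK x0) as [Hvc Hi0].
  exists c. split; [exact Hvc|split].
  - intros a. destruct (infinite_pred_inhabited V _ (proj2 (HK a))) as [w [Hw Hcw]].
    apply (proj1 (C_conv_ref a)).
    + exists v. split; [apply Hv|apply t_step, Hvc].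
    + exists w. split; assumption.
  - eapply infinite_pred_mono; [|exact Hi0]. intros w [_ Hcw]; exact Hcw.
Qed.

Lemma REF_Cap : REF E Cap.
Proof.
  intros v Hv Hinf.
  set (P := fun w => Cap w /\ infinite_pred (ancestor E w)).
  assert (HP_step : forall w, P w -> exists c, E w c /\ P c).
  { intros w [Hw Hiw]. destruct (Cap_child_step w Hw Hiw) as [c [Hwc HPc]].
    exists c. split; assumption. }
  eapply infinite_pred_mono;
    [|exact (ancestor_ray_infinite V E P acyclic HP_step v (conj Hv Hinf))].
  intros w [[Hw _] Hvw]. split; assumption.
Qed.

End ConvexRefinedChain.

Theorem mainTheorem6 (V : Type) (E : V -> V -> Prop) (t : V -> R) :
  infinite_biosphere V E t ->
  downward_generic (CONV E) /\
  downward_generic (fun S => CONV E S /\ REF E S) /\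
  downward_generic (IAP E).
Proof.
  intros [Ht [_ [Hchildren _]]].
  assert (Hacyc : forall v, ~ ancestor E v v).
  { intros v Hvv. pose proof (ancestor_time_lt V E t Ht v v Hvv). lra. }
  split; [apply CONV_downward_generic|split; [|apply IAP_downward_generic]].
  intros X lt C Hlin [x0 _] Hanti Hne HC. split.
  - apply (CONV_downward_generic V E X lt C Hlin (ex_intro _ x0 I) Hanti Hne).
    intros a. apply HC.
  - exact (REF_Cap V E Hchildren Hacyc X lt C x0 Hlin Hanti HC).
Qed.
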